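(* For every statement $c$, $\mathit{synt\_step\_image\_closed}(\mathit{stmt\_to\_ta}\ c)$ holds.
   Context: Syntax. Values: $\mathit{val} ::= \mathit{Bool}\ b \mid \mathit{Null}$. Expressions: $\mathit{expr} ::= \mathit{Val}\ v \mid \mathit{Var}\ x$. Statements: $\mathit{stmt} ::= \mathit{Empty} \mid \mathit{Assign}\ x\ v \mid \mathit{Seq}\ c_1\ c_2 \mid \mathit{Cond}\ e\ c_1\ c_2 \mid \mathit{While}\ e\ c$. Statement paths: $\mathit{stmt\_path} ::= \mathit{PTop} \mid \mathit{PSeqLeft}\ sp\ c_2 \mid \mathit{PSeqRight}\ c_1\ sp \mid \mathit{PCondLeft}\ e\ sp\ c_2 \mid \mathit{PCondRight}\ e\ c_1\ sp \mid \mathit{PWhile}\ e\ sp$. A location is $\mathit{Loc}\ c\ sp$; a syntactic configuration is a pair (location, Boolean). $\mathit{all\_locations}\ c\ sp$: contains $\mathit{Loc}\ c\ sp$, plus for $c=\mathit{Seq}\ c_1\ c_2$ the elements of $\mathit{all\_locations}\ c_1\ (\mathit{PSeqLeft}\ sp\ c_2)$ and $\mathit{all\_locations}\ c_2\ (\mathit{PSeqRight}\ c_1\ sp)$; for $c=\mathit{Cond}\ e\ c_1\ c_2$ those of $\mathit{all\_locations}\ c_1\ (\mathit{PCondLeft}\ e\ sp\ c_2)$ and $\mathit{all\_locations}\ c_2\ (\mathit{PCondRight}\ e\ c_1\ sp)$; for $c=\mathit{While}\ e\ c'$ those of $\mathit{all\_locations}\ c'\ (\mathit{PWhile}\ e\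 sp)$; nothing else. $\mathit{nodes\_of\_stmt\_locations}$ maps a list of locations to the list of syntactic configurations $(l,\mathit{True})$ and $(l,\mathit{False})$ for all $l$ in it. Next location: $\mathit{next\_loc}\ c\ \mathit{PTop} = (\mathit{Loc}\ c\ \mathit{PTop}, \mathit{False})$; $\mathit{next\_loc}\ c\ (\mathit{PSeqLeft}\ sp\ c_2) = (\mathit{Loc}\ c_2\ (\mathit{PSeqRight}\ c\ sp), \mathit{True})$; $\mathit{next\_loc}\ c\ (\mathit{PSeqRight}\ c_1\ sp) = (\mathit{Loc}\ (\mathit{Seq}\ c_1\ c)\ sp, \mathit{False})$; $\mathit{next\_loc}\ c\ (\mathit{PCondLeft}\ e\ sp\ c_2) = (\mathit{Loc}\ (\mathit{Cond}\ e\ c\ c_2)\ sp, \mathit{False})$; $\mathit{next\_loc}\ c\ (\mathit{PCondRight}\ e\ c_1\ sp) = (\mathit{Loc}\ (\mathit{Cond}\ e\ c_1\ c)\ sp, \mathit{False})$; $\mathit{next\_loc}\ c\ (\mathit{PWhile}\ e\ sp) = (\mathit{Loc}\ (\mathit{While}\ e\ c)\ sp, \mathit{True})$. $\mathit{synt\_step\_image}$: $(\mathit{Loc}\ \mathit{Empty}\ sp,\mathit{True})\mapsto[(\mathit{Loc}\ \mathit{Empty}\ sp,\mathit{False})]$; $(\mathit{Loc}\ (\mathit{Assign}\ x\ v)\ sp,\mathit{True})\mapsto[(\mathit{Loc}\ (\mathit{Assign}\ x\ v)\ sp,\mathit{False})]$; $(\mathit{Loc}\ (\mathit{Seq}\ c_1\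 c_2)\ sp,\mathit{True})\mapsto[(\mathit{Loc}\ c_1\ (\mathit{PSeqLeft}\ sp\ c_2),\mathit{True})]$; $(\mathit{Loc}\ (\mathit{Cond}\ e\ c_1\ c_2)\ sp,\mathit{True})\mapsto[(\mathit{Loc}\ c_1\ (\mathit{PCondLeft}\ e\ sp\ c_2),\mathit{True}),(\mathit{Loc}\ c_2\ (\mathit{PCondRight}\ e\ c_1\ sp),\mathit{True})]$; $(\mathit{Loc}\ (\mathit{While}\ e\ c)\ sp,\mathit{True})\mapsto[(\mathit{Loc}\ c\ (\mathit{PWhile}\ e\ sp),\mathit{True}),(\mathit{Loc}\ (\mathit{While}\ e\ c)\ sp,\mathit{False})]$; $(\mathit{Loc}\ c\ sp,\mathit{False})\mapsto[\,]$ if $sp=\mathit{PTop}$, else $[\mathit{next\_loc}\ c\ sp]$. Automata: actions are $\mathit{NoAct}$ and $\mathit{AssAct}\ x\ v$; an edge is a record $(\mathit{source},\mathit{action},\mathit{dest})$; an automaton is a record with a node list $\mathit{nodes}$, an edge list $\mathit{edges}$ and an initial node $\mathit{init\_s}$. $\mathit{action\_of\_synt\_config}(\mathit{Loc}\ (\mathit{Assign}\ x\ v)\ sp,\mathit{True})=\mathit{AssAct}\ x\ v$, and $\mathit{NoAct}$ otherwise. For a node $n$, $\mathit{edge\_of\_synt\_config}\ n$ is the list of edges $(\mathit{source}=n,\mathit{action}=\mathit{action\_of\_synt\_config}\ n,\mathit{dest}=t)$ for $t\in\mathit{synt\_step\_image}\ n$; $\mathit{edges\_of\_nodes}\ nds$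 is the concatenation of $\mathit{edge\_of\_synt\_config}\ n$ over $n\in nds$. $\mathit{stmt\_to\_ta}\ c$ is the automaton with $\mathit{nodes}=nds:=\mathit{nodes\_of\_stmt\_locations}(\mathit{all\_locations}\ c\ \mathit{PTop})$, $\mathit{edges}=\mathit{edges\_of\_nodes}\ nds$, $\mathit{init\_s}=(\mathit{Loc}\ c\ \mathit{PTop},\mathit{True})$. $\mathit{synt\_step\_image\_closed}(\mathit{aut})$ means: for every node $n\in\mathit{nodes}(\mathit{aut})$ and every $t\in\mathit{synt\_step\_image}\ n$, both $t\in\mathit{nodes}(\mathit{aut})$ and the edge $(\mathit{source}=n,\mathit{action}=\mathit{action\_of\_synt\_config}\ n,\mathit{dest}=t)\in\mathit{edges}(\mathit{aut})$. *)

From Stdlib Require Import List Bool.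
Import ListNotations.

Definition var := nat.

Inductive val : Type := Bool (b : bool) | Null.
Inductive expr : Type := Val (v : val) | Var (x : var).

Inductive stmt : Type :=
| Empty
| Assign (x : var) (v : val)
| Seq (c1 c2 : stmt)
| Cond (e : expr) (c1 c2 : stmt)
| While (e : expr) (c : stmt).

Inductive stmt_path : Type :=
| PTop
| PSeqLeft (sp : stmt_path) (c2 : stmt)
| PSeqRight (c1 : stmt) (sp : stmt_path)
| PCondLeft (e : expr) (sp : stmt_path) (c2 : stmt)
| PCondRight (e : expr) (c1 : stmt) (sp : stmt_path)
| PWhile (e : expr) (sp : stmt_path).

Inductive location : Type := Loc (c : stmt) (sp : stmt_path).

Definition synt_config : Type := (location * bool)%type.

Fixpoint all_locations (c : stmt) (sp : stmt_path) : list location :=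
  Loc c sp ::
  match c with
  | Seq c1 c2 => all_locations c1 (PSeqLeft sp c2) ++ all_locations c2 (PSeqRight c1 sp)
  | Cond e c1 c2 => all_locations c1 (PCondLeft e sp c2) ++ all_locations c2 (PCondRight e c1 sp)
  | While e c' => all_locations c' (PWhile e sp)
  | _ => []
  end.

Definition nodes_of_stmt_locations (ls : list location) : list synt_config :=
  flat_map (fun l => [(l, true); (l, false)]) ls.

Definition next_loc (c : stmt) (sp : stmt_path) : synt_config :=
  match sp with
  | PTop => (Loc c PTop, false)
  | PSeqLeft sp' c2 => (Loc c2 (PSeqRight c sp'), true)
  | PSeqRight c1 sp' => (Loc (Seq c1 c) sp', false)
  | PCondLeft e sp' c2 => (Loc (Cond e c c2) sp', false)
  | PCondRight e c1 sp' => (Loc (Cond e c1 c) sp', false)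
  | PWhile e sp' => (Loc (While e c) sp', true)
  end.

Definition synt_step_image (n : synt_config) : list synt_config :=
  match n with
  | (Loc Empty sp, true) => [(Loc Empty sp, false)]
  | (Loc (Assign x v) sp, true) => [(Loc (Assign x v) sp, false)]
  | (Loc (Seq c1 c2) sp, true) => [(Loc c1 (PSeqLeft sp c2), true)]
  | (Loc (Cond e c1 c2) sp, true) =>
      [(Loc c1 (PCondLeft e sp c2), true); (Loc c2 (PCondRight e c1 sp), true)]
  | (Loc (While e c) sp, true) =>
      [(Loc c (PWhile e sp), true); (Loc (While e c) sp, false)]
  | (Loc c sp, false) =>
      match sp with PTop => [] | _ => [next_loc c sp] end
  end.

Inductive action : Type := NoAct | AssAct (x : var) (v : val).

Record edge : Type := mkEdge { source : synt_config; act : action; dest : synt_config }.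

Record automaton : Type :=
  mkAut { nodes : list synt_config; edges : list edge; init_s : synt_config }.

Definition action_of_synt_config (n : synt_config) : action :=
  match n with
  | (Loc (Assign x v) _, true) => AssAct x v
  | _ => NoAct
  end.

Definition edge_of_synt_config (n : synt_config) : list edge :=
  map (fun t => mkEdge n (action_of_synt_config n) t) (synt_step_image n).

Definition edges_of_nodes (nds : list synt_config) : list edge :=
  flat_map edge_of_synt_config nds.

Definition stmt_to_ta (c : stmt) : automaton :=
  let nds := nodes_of_stmt_locations (all_locations c PTop) in
  mkAut nds (edges_of_nodes nds) (Loc c PTop, true).

Definition synt_step_image_closed (aut : automaton) : Prop :=
  forall n, In n (nodes aut) ->
  forall t, In t (synt_step_image n) ->
    In t (nodes aut) /\
    In (mkEdge n (action_of_synt_config n) t) (edges aut).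

(* Every node of [stmt_to_ta c] is a location of the syntax tree of [c]
   (entered or exited).  Entering a location steps to one of its children, or
   (for a loop) exits it; exiting a location steps to its parent, or (after the
   left part of a sequence) enters the parent's right part.  The location set of
   a tree is closed under subtrees and under parents below the root, so all these
   targets are again nodes; the edge to each target is produced by
   [edges_of_nodes] by construction. *)

From Stdlib Require Import List.
Import ListNotations.

Definition parent (c : stmt) (sp : stmt_path) : option location :=
  match sp with
  | PTop => None
  | PSeqLeft sp' c2 => Some (Loc (Seq c c2) sp')
  | PSeqRight c1 sp' => Some (Loc (Seq c1 c) sp')
  | PCondLeft e sp' c2 => Some (Loc (Cond e c c2) sp')
  | PCondRight e c1 sp' => Some (Loc (Cond e c1 c) sp')
  | PWhile e sp' => Some (Loc (While e c) sp')
  end.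

Lemma all_locations_self c sp : In (Loc c sp) (all_locations c sp).
Proof. destruct c; left; reflexivity. Qed.

Lemma all_locations_incl c sp c' sp' :
  In (Loc c' sp') (all_locations c sp) ->
  incl (all_locations c' sp') (all_locations c sp).
Proof.
  revert sp; induction c; intros sp [Hroot | Hsub];
    try (injection Hroot as -> ->; apply incl_refl); try contradiction;
    intros l Hl; right.
  1-2: apply in_app_or in Hsub as [Hsub | Hsub]; apply in_or_app;
         [left; exact (IHc1 _ Hsub l Hl) | right; exact (IHc2 _ Hsub l Hl)].
  exact (IHc _ Hsub l Hl).
Qed.

Lemma parent_in_all_locations c sp c' sp' p :
  In (Loc c' sp') (all_locations c sp) -> parent c' sp' = Some p ->
  (c' = c /\ sp' = sp) \/ In p (all_locations c sp).
Proof.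
  revert sp; induction c; intros sp [Hroot | Hsub] Hp;
    try (injection Hroot as -> ->; left; split; reflexivity); try contradiction;
    right.
  1-2: apply in_app_or in Hsub as [Hsub | Hsub];
         [ destruct (IHc1 _ Hsub Hp) as [[-> ->] | Hin]
         | destruct (IHc2 _ Hsub Hp) as [[-> ->] | Hin] ];
         try (injection Hp as <-; left; reflexivity);
         right; apply in_or_app; auto.
  destruct (IHc _ Hsub Hp) as [[-> ->] | Hin];
    [injection Hp as <-; left; reflexivity | right; exact Hin].
Qed.

Corollary parent_in_all_locations_top c c' sp' p :
  In (Loc c' sp') (all_locations c PTop) -> parent c' sp' = Some p ->
  In p (all_locations c PTop).
Proof.
  intros Hl Hp.
  destruct (parent_in_all_locations _ _ _ _ _ Hl Hp) as [[_ ->] | Hin];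
    [discriminate | exact Hin].
Qed.

Lemma synt_step_image_entry c sp t :
  In t (synt_step_image (Loc c sp, true)) -> In (fst t) (all_locations c sp).
Proof.
  destruct c; simpl; intros Ht; decompose sum Ht; subst; simpl; auto.
  - right; apply in_or_app; left; apply all_locations_self.
  - right; apply in_or_app; left; apply all_locations_self.
  - right; apply in_or_app; right; apply all_locations_self.
  - right; apply all_locations_self.
Qed.

Lemma synt_step_image_exit c sp t :
  In t (synt_step_image (Loc c sp, false)) ->
  t = next_loc c sp /\ exists p, parent c sp = Some p.
Proof.
  destruct c, sp; simpl; intros Ht; try contradiction;
    destruct Ht as [<- | []]; split; eauto.
Qed.

Lemma next_loc_in_parent c sp pc psp :
  parent c sp = Some (Loc pc psp) ->
  In (fst (next_loc c sp)) (all_locations pc psp).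
Proof.
  destruct sp; simpl; intros Hp; try discriminate;
    injection Hp as <- <-; try apply all_locations_self.
  right; apply in_or_app; right; apply all_locations_self.
Qed.

Lemma synt_step_image_in_all_locations c l b t :
  In l (all_locations c PTop) -> In t (synt_step_image (l, b)) ->
  In (fst t) (all_locations c PTop).
Proof.
  destruct l as [c' sp]; intros Hl Ht; destruct b.
  - exact (all_locations_incl _ _ _ _ Hl _ (synt_step_image_entry _ _ _ Ht)).
  - destruct (synt_step_image_exit _ _ _ Ht) as [-> [[pc psp] Hp]].
    apply (all_locations_incl _ _ pc psp).
    + exact (parent_in_all_locations_top _ _ _ _ Hl Hp).
    + exact (next_loc_in_parent _ _ _ _ Hp).
Qed.

Lemma in_nodes_of_stmt_locations l b ls :
  In (l, b) (nodes_of_stmt_locations ls) <-> In l ls.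
Proof.
  unfold nodes_of_stmt_locations; rewrite in_flat_map; split.
  - intros [l' [Hl' [Heq | [Heq | []]]]]; injection Heq as ->; exact Hl'.
  - intros Hl; exists l; split; [exact Hl | destruct b; simpl; auto].
Qed.

Lemma edges_of_nodes_complete nds n t :
  In n nds -> In t (synt_step_image n) ->
  In (mkEdge n (action_of_synt_config n) t) (edges_of_nodes nds).
Proof.
  intros Hn Ht; apply in_flat_map; exists n; split; [exact Hn |].
  apply in_map_iff; exists t; split; [reflexivity | exact Ht].
Qed.

Theorem lemma3 : forall c : stmt, synt_step_image_closed (stmt_to_ta c).
Proof.
  intros c [l b] Hn [l' b'] Ht; simpl in *; split.
  - apply in_nodes_of_stmt_locations in Hn.
    apply in_nodes_of_stmt_locations.
    exact (synt_step_image_in_all_locations _ _ _ _ Hn Ht).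
  - exact (edges_of_nodes_complete _ _ _ Hn Ht).
Qed.
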